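(* Consider a planar motion of oriented m-triangles in the $xy$-plane with normal vector $\mathbf k$ and angular momentum $\mathbf\Omega=\Omega\mathbf k$, and let $\omega_i=\dot\phi_i$ be the scalar angular velocity of the position vector $\mathbf a_i$ (where $\phi_i$ is its polar angle in the plane). Then, at nondegenerate configurations, $$\omega_i=\omega_i^0+\frac{\Omega}{I},\qquad i=1,2,3,$$ where (with indices mod $3$) $$\omega_1^0=\frac1I\big(I_3\dot\alpha_2-I_2\dot\alpha_3\big)=\frac{1}{8m_1m_2m_3\Delta I}\Big[(C_3I_3-C_2I_2)\frac{\dot I_1}{I_1}-(C_1+2m_2I_3)\dot I_2+(C_1+2m_3I_2)\dot I_3\Big],$$ and $\omega_2^0,\omega_3^0$ are obtained by cyclic permutation of the indices.
   Context: Masses $m_1,m_2,m_3>0$, $m_1+m_2+m_3=1$; position vectors $\mathbf a_i$ with $\sum m_i\mathbf a_i=0$ (center of mass at the origin $O$), vertices $P_i$ with $\mathbf a_i=\overrightarrow{OP_i}$. $I_i=m_i|\mathbf a_i|^2$, $I=I_1+I_2+I_3$. $\alpha_j$ is the central angle at $O$ opposite to the vertex $P_j$ (the angle between $\mathbf a_{j+1}$ and $\mathbf a_{j+2}$), so $\alpha_1+\alpha_2+\alpha_3=2\pi$. $\Delta$ is the area of the triangle $P_1P_2P_3$. $C_1=-m_1I_1+m_2I_2+m_3I_3$, and $C_2,C_3$ by cyclic permutation. The angular momentum is $\mathbf\Omega=\sum m_i\mathbf a_i\times\dot{\mathbf a}_i$. *)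

From Stdlib Require Export Reals.
From Coquelicot Require Export Coquelicot.
Open Scope R_scope.

(* Bodies are indexed 0,1,2 (paper: 1,2,3); indices are taken mod 3. *)
Definition nx (i : nat) : nat := ((i + 1) mod 3)%nat.
Definition px (i : nat) : nat := ((i + 2) mod 3)%nat.

(* A planar motion: position a_i(s) = (x i s, y i s) in the xy-plane. *)

Definition sqn (x y : nat -> R -> R) (i : nat) (s : R) : R :=
  x i s ^ 2 + y i s ^ 2.

Definition Imom (m : nat -> R) (x y : nat -> R -> R) (i : nat) (s : R) : R :=
  m i * sqn x y i s.

Definition Itot (m : nat -> R) (x y : nat -> R -> R) (s : R) : R :=
  Imom m x y 0 s + Imom m x y 1 s + Imom m x y 2 s.

Definition Cc (m : nat -> R) (x y : nat -> R -> R) (i : nat) (s : R) : R :=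
  - m i * Imom m x y i s + m (nx i) * Imom m x y (nx i) s
    + m (px i) * Imom m x y (px i) s.

Definition alpha (x y : nat -> R -> R) (j : nat) (s : R) : R :=
  acos ((x (nx j) s * x (px j) s + y (nx j) s * y (px j) s)
        / (sqrt (sqn x y (nx j) s) * sqrt (sqn x y (px j) s))).

(* Signed area of the triangle P_1 P_2 P_3 (positive iff counterclockwise). *)
Definition area (x y : nat -> R -> R) (s : R) : R :=
  ((x 1%nat s - x 0%nat s) * (y 2%nat s - y 0%nat s)
   - (y 1%nat s - y 0%nat s) * (x 2%nat s - x 0%nat s)) / 2.

Definition angmom (m : nat -> R) (x y : nat -> R -> R) (s : R) : R :=
  m 0%nat * (x 0%nat s * Derive (y 0%nat) s - y 0%nat s * Derive (x 0%nat) s)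
  + m 1%nat * (x 1%nat s * Derive (y 1%nat) s - y 1%nat s * Derive (x 1%nat) s)
  + m 2%nat * (x 2%nat s * Derive (y 2%nat) s - y 2%nat s * Derive (x 2%nat) s).

(* Let ω_i = (a_i × ȧ_i)/|a_i|² be the angular velocity of a_i. When a_j × a_k > 0 the
   central angle α_i is φ_k - φ_j, so α̇_i = ω_k - ω_j, and since Ω = Σ I_i ω_i the
   decomposition ω_i = ω_i^0 + Ω/I is linear algebra.
   For the closed form, differentiating a_j·a_k with ȧ = (ṙ/r) a + ω J a gives
     (ω_k - ω_j) (a_j × a_k) = (İ_j/(2 I_j) + İ_k/(2 I_k)) a_j·a_k - (a_j·a_k)˙,
   and the centre-of-mass condition Σ m_i a_i = 0 expresses the triangle through its
   moments of inertia: 2 m_j m_k a_j·a_k = -C_i and a_j × a_k = 2 m_i Δ. *)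

From Stdlib Require Import Lra Lia.

Definition dot (u v : R * R) : R := fst u * fst v + snd u * snd v.
Definition cross (u v : R * R) : R := fst u * snd v - snd u * fst v.
Definition norm2 (u : R * R) : R := fst u ^ 2 + snd u ^ 2.
(* For a point [u] moving with velocity [du], [angvel u du] is the polar angular velocity
   and [radrate u du] the logarithmic radial rate r'/r. *)
Definition angvel (u du : R * R) : R := cross u du / norm2 u.
Definition radrate (u du : R * R) : R := dot u du / norm2 u.

Lemma dot_self (u : R * R) : dot u u = norm2 u.
Proof. unfold dot, norm2; ring. Qed.

Lemma dot_cross_sqr (u v : R * R) :
  dot u v ^ 2 + cross u v ^ 2 = norm2 u * norm2 v.
Proof. unfold dot, cross, norm2; ring. Qed.

Lemma norm2_pos_of_cross (u v : R * R) :
  cross u v <> 0 -> 0 < norm2 u /\ 0 < norm2 v.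
Proof.
intro Hc; pose proof (dot_cross_sqr u v) as Hl.
assert (0 <= norm2 u) by (unfold norm2; nra).
assert (0 <= norm2 v) by (unfold norm2; nra).
assert (0 < cross u v ^ 2) by (rewrite <- Rsqr_pow2; apply Rlt_0_sqr; exact Hc).
split; nra.
Qed.

Lemma dot_comm (u v : R * R) : dot u v = dot v u.
Proof. unfold dot; ring. Qed.

Lemma angvel_sub_cross (u v du dv : R * R) :
  norm2 u <> 0 -> norm2 v <> 0 ->
  (angvel v dv - angvel u du) * cross u v
  = (radrate u du + radrate v dv) * dot u v - (dot u dv + dot v du).
Proof.
destruct u, v, du, dv; unfold angvel, radrate, dot, cross, norm2; simpl.
intros Hu Hv; field; split; lra.
Qed.

Lemma is_derive_acos (c : R) :
  -1 < c < 1 -> is_derive acos c (-1 / sqrt (1 - c²)).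
Proof.
intro Hc; apply is_derive_Reals.
rewrite <- (derive_pt_acos _ Hc).
apply derive_pt_eq_1 with (derivable_pt_acos _ Hc); reflexivity.
Qed.

Lemma Derive_polar_angle (X Y phi : R -> R) (t : R) :
  ex_derive X t -> ex_derive Y t -> ex_derive phi t ->
  (forall s, X s = sqrt (norm2 (X s, Y s)) * cos (phi s) /\
             Y s = sqrt (norm2 (X s, Y s)) * sin (phi s)) ->
  0 < norm2 (X t, Y t) ->
  Derive phi t = angvel (X t, Y t) (Derive X t, Derive Y t).
Proof.
intros HX HY Hphi Hpolar Hpos.
assert (Hzero : forall s, X s * sin (phi s) - Y s * cos (phi s) = 0).
{ intro s; destruct (Hpolar s) as [EX EY].
  set (r := sqrt _) in EX, EY; rewrite EX, EY; ring. }
assert (Hconst : is_derive (fun s => X s * sin (phi s) - Y s * cos (phi s)) t 0).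
{ apply is_derive_ext with (fun _ => 0); [intro s; symmetry; apply Hzero |].
  auto_derive; auto. }
assert (Hderiv : is_derive (fun s => X s * sin (phi s) - Y s * cos (phi s)) t
   (Derive X t * sin (phi t) - Derive Y t * cos (phi t)
    + (X t * cos (phi t) + Y t * sin (phi t)) * Derive phi t)).
{ auto_derive; auto.
  change (Derive (fun s => X s) t) with (Derive X t).
  change (Derive (fun s => Y s) t) with (Derive Y t).
  change (Derive (fun s => phi s) t) with (Derive phi t).
  ring. }
pose proof (is_derive_unique _ _ _ Hconst) as E0.
rewrite (is_derive_unique _ _ _ Hderiv) in E0.
destruct (Hpolar t) as [EX EY].
set (r := sqrt (norm2 (X t, Y t))) in *.
assert (Hrr : r * r = norm2 (X t, Y t)) by (apply sqrt_sqrt; lra).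
assert (Hr0 : 0 < r) by (apply sqrt_lt_R0; lra).
assert (Hproj : X t * cos (phi t) + Y t * sin (phi t) = r).
{ pose proof (sin2_cos2 (phi t)) as Hsc; unfold Rsqr in Hsc.
  rewrite EX, EY; transitivity (r * (sin (phi t) * sin (phi t) + cos (phi t) * cos (phi t)));
    [ring | rewrite Hsc; ring]. }
rewrite Hproj in E0.
unfold angvel, cross; simpl; rewrite <- Hrr, EX, EY.
apply Rmult_eq_reg_l with r; [| lra].
transitivity (cos (phi t) * Derive Y t - sin (phi t) * Derive X t); [lra | field; lra].
Qed.

Lemma is_derive_dot (X1 Y1 X2 Y2 : R -> R) (t : R) :
  ex_derive X1 t -> ex_derive Y1 t -> ex_derive X2 t -> ex_derive Y2 t ->
  is_derive (fun s => dot (X1 s, Y1 s) (X2 s, Y2 s)) t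
    (dot (Derive X1 t, Derive Y1 t) (X2 t, Y2 t)
     + dot (X1 t, Y1 t) (Derive X2 t, Derive Y2 t)).
Proof.
intros HX1 HY1 HX2 HY2; unfold dot; simpl.
auto_derive; [tauto |].
change (Derive (fun s => X1 s) t) with (Derive X1 t).
change (Derive (fun s => Y1 s) t) with (Derive Y1 t).
change (Derive (fun s => X2 s) t) with (Derive X2 t).
change (Derive (fun s => Y2 s) t) with (Derive Y2 t).
ring.
Qed.

Lemma is_derive_norm2 (X Y : R -> R) (t : R) :
  ex_derive X t -> ex_derive Y t ->
  is_derive (fun s => norm2 (X s, Y s)) t (2 * dot (X t, Y t) (Derive X t, Derive Y t)).
Proof.
intros HX HY.
apply is_derive_ext with (fun s => dot (X s, Y s) (X s, Y s)); [intro s; apply dot_self |].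
replace (2 * dot (X t, Y t) (Derive X t, Derive Y t))
  with (dot (Derive X t, Derive Y t) (X t, Y t) + dot (X t, Y t) (Derive X t, Derive Y t))
  by (unfold dot; simpl; ring).
apply is_derive_dot; assumption.
Qed.

Lemma is_derive_sqrt_norm2 (X Y : R -> R) (t : R) :
  ex_derive X t -> ex_derive Y t -> 0 < norm2 (X t, Y t) ->
  is_derive (fun s => sqrt (norm2 (X s, Y s))) t
    (radrate (X t, Y t) (Derive X t, Derive Y t) * sqrt (norm2 (X t, Y t))).
Proof.
intros HX HY Hpos.
replace (radrate (X t, Y t) (Derive X t, Derive Y t) * sqrt (norm2 (X t, Y t)))
  with (2 * dot (X t, Y t) (Derive X t, Derive Y t) / (2 * sqrt (norm2 (X t, Y t)))).
- apply is_derive_sqrt; [apply is_derive_norm2 |]; assumption.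
- pose proof (sqrt_sqrt _ (Rlt_le _ _ Hpos)) as Hsq.
  pose proof (sqrt_lt_R0 _ Hpos).
  unfold radrate; rewrite <- Hsq at 2; field; lra.
Qed.

Lemma is_derive_cos_angle (X1 Y1 X2 Y2 : R -> R) (t : R) :
  ex_derive X1 t -> ex_derive Y1 t -> ex_derive X2 t -> ex_derive Y2 t ->
  0 < norm2 (X1 t, Y1 t) -> 0 < norm2 (X2 t, Y2 t) ->
  let u := (X1 t, Y1 t) in
  let v := (X2 t, Y2 t) in
  let du := (Derive X1 t, Derive Y1 t) in
  let dv := (Derive X2 t, Derive Y2 t) in
  is_derive (fun s => dot (X1 s, Y1 s) (X2 s, Y2 s)
                      / (sqrt (norm2 (X1 s, Y1 s)) * sqrt (norm2 (X2 s, Y2 s)))) t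
    ((dot du v + dot u dv - (radrate u du + radrate v dv) * dot u v)
     / (sqrt (norm2 u) * sqrt (norm2 v))).
Proof.
intros HX1 HY1 HX2 HY2 Hu Hv u v du dv.
assert (Hprod := is_derive_mult _ _ t _ _
          (is_derive_sqrt_norm2 X1 Y1 t HX1 HY1 Hu)
          (is_derive_sqrt_norm2 X2 Y2 t HX2 HY2 Hv) Rmult_comm).
set (ru := sqrt (norm2 u)); set (rv := sqrt (norm2 v)).
assert (Pru : 0 < ru) by (apply sqrt_lt_R0; exact Hu).
assert (Prv : 0 < rv) by (apply sqrt_lt_R0; exact Hv).
assert (Hquot := is_derive_div _ _ t _ _ (is_derive_dot X1 Y1 X2 Y2 t HX1 HY1 HX2 HY2)
                   Hprod ltac:(change (ru * rv <> 0); nra)).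
replace ((dot du v + dot u dv - (radrate u du + radrate v dv) * dot u v) / (ru * rv))
  with (((dot du v + dot u dv) * (ru * rv)
         - dot u v * (radrate u du * ru * rv + ru * (radrate v dv * rv))) / (ru * rv) ^ 2)
  by (field; lra).
exact Hquot.
Qed.

Lemma is_derive_angle_between (X1 Y1 X2 Y2 : R -> R) (t : R) :
  ex_derive X1 t -> ex_derive Y1 t -> ex_derive X2 t -> ex_derive Y2 t ->
  0 < cross (X1 t, Y1 t) (X2 t, Y2 t) ->
  is_derive (fun s => acos (dot (X1 s, Y1 s) (X2 s, Y2 s)
                            / (sqrt (norm2 (X1 s, Y1 s)) * sqrt (norm2 (X2 s, Y2 s))))) t
    (angvel (X2 t, Y2 t) (Derive X2 t, Derive Y2 t)
     - angvel (X1 t, Y1 t) (Derive X1 t, Derive Y1 t)).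
Proof.
intros HX1 HY1 HX2 HY2 Hcross.
destruct (norm2_pos_of_cross (X1 t, Y1 t) (X2 t, Y2 t) ltac:(lra)) as [Hu Hv].
pose proof (is_derive_cos_angle X1 Y1 X2 Y2 t HX1 HY1 HX2 HY2 Hu Hv) as Hcos; cbv zeta in Hcos.
set (u := (X1 t, Y1 t)) in *; set (v := (X2 t, Y2 t)) in *.
set (du := (Derive X1 t, Derive Y1 t)) in *; set (dv := (Derive X2 t, Derive Y2 t)) in *.
set (ru := sqrt (norm2 u)) in *; set (rv := sqrt (norm2 v)) in *.
assert (Hru : ru * ru = norm2 u) by (apply sqrt_sqrt; lra).
assert (Hrv : rv * rv = norm2 v) by (apply sqrt_sqrt; lra).
assert (Pru : 0 < ru) by (apply sqrt_lt_R0; lra).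
assert (Prv : 0 < rv) by (apply sqrt_lt_R0; lra).
set (c := dot u v / (ru * rv)).
assert (Hsin : 1 - c² = (cross u v / (ru * rv))²).
{ unfold c, Rsqr.
  transitivity ((ru * ru * (rv * rv) - dot u v ^ 2) / (ru * rv) ^ 2); [field; lra |].
  rewrite Hru, Hrv, <- (dot_cross_sqr u v); field; lra. }
assert (Hrange : -1 < c < 1).
{ assert (0 < (cross u v / (ru * rv))²) by (apply Rlt_0_sqr; apply Rgt_not_eq, Rdiv_lt_0_compat; nra).
  unfold Rsqr in *; split; nra. }
assert (Hsqrt : sqrt (1 - c²) = cross u v / (ru * rv)).
{ rewrite Hsin; apply sqrt_Rsqr; apply Rlt_le, Rdiv_lt_0_compat; nra. }
replace (angvel v dv - angvel u du)
  with (scal ((dot du v + dot u dv - (radrate u du + radrate v dv) * dot u v) / (ru * rv))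
             (-1 / sqrt (1 - c²))).
- exact (is_derive_comp acos (fun s => dot (X1 s, Y1 s) (X2 s, Y2 s)
              / (sqrt (norm2 (X1 s, Y1 s)) * sqrt (norm2 (X2 s, Y2 s)))) t _ _
           (is_derive_acos c Hrange) Hcos).
- apply Rmult_eq_reg_r with (cross u v); [| lra].
  rewrite angvel_sub_cross, (dot_comm v du) by lra.
  rewrite Hsqrt; unfold scal; simpl; unfold mult; simpl.
  field; nra.
Qed.

Lemma nx_lt3 (i : nat) : (nx i < 3)%nat.
Proof. apply Nat.mod_upper_bound; lia. Qed.

Lemma px_lt3 (i : nat) : (px i < 3)%nat.
Proof. apply Nat.mod_upper_bound; lia. Qed.

Lemma nx_nx (i : nat) : nx (nx i) = px i.
Proof. unfold nx, px; rewrite Nat.Div0.add_mod_idemp_l; f_equal; lia. Qed.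

Lemma px_px (i : nat) : px (px i) = nx i.
Proof.
unfold nx, px; rewrite Nat.Div0.add_mod_idemp_l.
replace (i + 2 + 2)%nat with (i + 1 + 1 * 3)%nat by lia; apply Nat.Div0.mod_add.
Qed.

Lemma px_nx (i : nat) : (i < 3)%nat -> px (nx i) = i.
Proof. intro Hi; destruct i as [| [| [| i]]]; reflexivity || lia. Qed.

Lemma nx_px (i : nat) : (i < 3)%nat -> nx (px i) = i.
Proof. intro Hi; destruct i as [| [| [| i]]]; reflexivity || lia. Qed.

Lemma cyclic_sum (f : nat -> R) (i : nat) :
  (i < 3)%nat -> f i + f (nx i) + f (px i) = f 0%nat + f 1%nat + f 2%nat.
Proof. intro Hi; destruct i as [| [| [| i]]]; try lia; unfold nx, px; cbn -[Rplus Rmult]; ring. Qed.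

Lemma cyclic_prod (f : nat -> R) (i : nat) :
  (i < 3)%nat -> f i * f (nx i) * f (px i) = f 0%nat * f 1%nat * f 2%nat.
Proof. intro Hi; destruct i as [| [| [| i]]]; try lia; unfold nx, px; cbn -[Rplus Rmult]; ring. Qed.

Definition centered (a b c : R) (p q r : R * R) : Prop :=
  a * fst p + b * fst q + c * fst r = 0 /\ a * snd p + b * snd q + c * snd r = 0.

Definition signed_area (p q r : R * R) : R :=
  ((fst q - fst p) * (snd r - snd p) - (snd q - snd p) * (fst r - fst p)) / 2.

Lemma signed_area_rotate (p q r : R * R) : signed_area q r p = signed_area p q r.
Proof. unfold signed_area; field. Qed.

Lemma cross_centered (a b c : R) (p q r : R * R) :
  a + b + c = 1 -> centered a b c p q r -> cross q r = 2 * a * signed_area p q r.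
Proof.
destruct p as [x0 y0], q as [x1 y1], r as [x2 y2].
unfold centered, cross, signed_area; simpl; intros Hsum [Hx Hy].
replace (2 * a * (((x1 - x0) * (y2 - y0) - (y1 - y0) * (x2 - x0)) / 2))
  with (a * (x1 * y2 - y1 * x2) - (x1 - x2) * (a * y0) + (y1 - y2) * (a * x0)) by field.
replace (a * x0) with (- (b * x1 + c * x2)) by lra.
replace (a * y0) with (- (b * y1 + c * y2)) by lra.
replace a with (1 - b - c) by lra.
ring.
Qed.

Lemma dot_centered (a b c : R) (p q r p' q' r' : R * R) :
  centered a b c p q r -> centered a b c p' q' r' ->
  a ^ 2 * dot p p' = b ^ 2 * dot q q' + c ^ 2 * dot r r' + b * c * (dot q r' + dot r q').
Proof.
destruct p as [x0 y0], q as [x1 y1], r as [x2 y2].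
destruct p' as [u0 v0], q' as [u1 v1], r' as [u2 v2].
unfold centered, dot; cbn [fst snd]; intros [Hx Hy] [Hu Hv].
replace (a ^ 2 * (x0 * u0 + y0 * v0)) with ((a * x0) * (a * u0) + (a * y0) * (a * v0)) by ring.
replace (a * x0) with (- (b * x1 + c * x2)) by lra.
replace (a * y0) with (- (b * y1 + c * y2)) by lra.
replace (a * u0) with (- (b * u1 + c * u2)) by lra.
replace (a * v0) with (- (b * v1 + c * v2)) by lra.
ring.
Qed.

Section Triangle.

Variables (m : nat -> R) (x y : nat -> R -> R) (t : R).

Hypothesis Hm_pos : forall i, (i < 3)%nat -> 0 < m i.
Hypothesis Hm_sum : m 0%nat + m 1%nat + m 2%nat = 1.
Hypothesis Hcom_x :
  forall s, m 0%nat * x 0%nat s + m 1%nat * x 1%nat s + m 2%nat * x 2%nat s = 0.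
Hypothesis Hcom_y :
  forall s, m 0%nat * y 0%nat s + m 1%nat * y 1%nat s + m 2%nat * y 2%nat s = 0.
Hypothesis Hdx : forall i, (i < 3)%nat -> ex_derive (x i) t.
Hypothesis Hdy : forall i, (i < 3)%nat -> ex_derive (y i) t.
Hypothesis Hnondeg : 0 < area x y t.

Let p i := (x i t, y i t).
Let dp i := (Derive (x i) t, Derive (y i) t).
Let omega i := angvel (p i) (dp i).
Let dI i := Derive (fun s => Imom m x y i s) t.

Lemma Derive_centered (f : nat -> R -> R) :
  (forall s, m 0%nat * f 0%nat s + m 1%nat * f 1%nat s + m 2%nat * f 2%nat s = 0) ->
  (forall i, (i < 3)%nat -> ex_derive (f i) t) ->
  m 0%nat * Derive (f 0%nat) t + m 1%nat * Derive (f 1%nat) t + m 2%nat * Derive (f 2%nat) t = 0.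
Proof.
intros Hf Hdf.
assert (Hsum : is_derive (fun s => m 0%nat * f 0%nat s + m 1%nat * f 1%nat s + m 2%nat * f 2%nat s) t
   (m 0%nat * Derive (f 0%nat) t + m 1%nat * Derive (f 1%nat) t + m 2%nat * Derive (f 2%nat) t)).
{ auto_derive; [repeat split; apply Hdf; lia |]; rewrite !Rmult_1_l; reflexivity. }
rewrite <- (is_derive_unique _ _ _ Hsum), (Derive_ext _ (fun _ => 0)) by exact Hf.
apply Derive_const.
Qed.

Lemma centered_pos (i : nat) :
  (i < 3)%nat -> centered (m i) (m (nx i)) (m (px i)) (p i) (p (nx i)) (p (px i)).
Proof.
intro Hi; split.
- exact (eq_trans (cyclic_sum (fun l => m l * x l t) i Hi) (Hcom_x t)).
- exact (eq_trans (cyclic_sum (fun l => m l * y l t) i Hi) (Hcom_y t)).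
Qed.

Lemma centered_vel (i : nat) :
  (i < 3)%nat -> centered (m i) (m (nx i)) (m (px i)) (dp i) (dp (nx i)) (dp (px i)).
Proof.
intro Hi; split.
- exact (eq_trans (cyclic_sum (fun l => m l * Derive (x l) t) i Hi) (Derive_centered x Hcom_x Hdx)).
- exact (eq_trans (cyclic_sum (fun l => m l * Derive (y l) t) i Hi) (Derive_centered y Hcom_y Hdy)).
Qed.

Lemma signed_area_cyclic (i : nat) :
  (i < 3)%nat -> signed_area (p i) (p (nx i)) (p (px i)) = area x y t.
Proof.
intro Hi; destruct i as [| [| [| i]]]; [reflexivity | | | lia].
- exact (signed_area_rotate (p 0%nat) (p 1%nat) (p 2%nat)).
- transitivity (signed_area (p 1%nat) (p 2%nat) (p 0%nat)); apply signed_area_rotate.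
Qed.

Lemma cross_cyclic (i : nat) :
  (i < 3)%nat -> cross (p (nx i)) (p (px i)) = 2 * m i * area x y t.
Proof.
intro Hi; rewrite <- (signed_area_cyclic i Hi).
apply (cross_centered _ (m (nx i)) (m (px i))); [| exact (centered_pos i Hi)].
rewrite (cyclic_sum m i Hi); exact Hm_sum.
Qed.

Lemma cross_cyclic_pos (i : nat) : (i < 3)%nat -> 0 < cross (p (nx i)) (p (px i)).
Proof. intro Hi; rewrite (cross_cyclic i Hi); pose proof (Hm_pos i Hi); nra. Qed.

Lemma norm2_vertex_pos (i : nat) : (i < 3)%nat -> 0 < norm2 (p i).
Proof.
intro Hi; pose proof (cross_cyclic_pos (px i) (px_lt3 i)) as Hc.
rewrite nx_px, px_px in Hc by exact Hi.
apply (norm2_pos_of_cross _ (p (nx i))); lra.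
Qed.

Lemma Imom_eq (i : nat) : Imom m x y i t = m i * norm2 (p i).
Proof. reflexivity. Qed.

Lemma Derive_Imom (i : nat) : (i < 3)%nat -> dI i = 2 * m i * dot (p i) (dp i).
Proof.
intro Hi; apply is_derive_unique.
replace (2 * m i * dot (p i) (dp i)) with (m i * (2 * dot (p i) (dp i))) by ring.
apply (is_derive_scal (fun s => norm2 (x i s, y i s))), is_derive_norm2; auto.
Qed.

Lemma Derive_alpha (j : nat) :
  (j < 3)%nat -> Derive (fun s => alpha x y j s) t = omega (px j) - omega (nx j).
Proof.
intro Hj; apply is_derive_unique.
exact (is_derive_angle_between (x (nx j)) (y (nx j)) (x (px j)) (y (px j)) t
         (Hdx _ (nx_lt3 j)) (Hdy _ (nx_lt3 j)) (Hdx _ (px_lt3 j)) (Hdy _ (px_lt3 j))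
         (cross_cyclic_pos j Hj)).
Qed.

Lemma Itot_pos : 0 < Itot m x y t.
Proof.
unfold Itot; rewrite !Imom_eq.
pose proof (Hm_pos 0 ltac:(lia)); pose proof (Hm_pos 1 ltac:(lia)); pose proof (Hm_pos 2 ltac:(lia)).
pose proof (norm2_vertex_pos 0 ltac:(lia)); pose proof (norm2_vertex_pos 1 ltac:(lia));
  pose proof (norm2_vertex_pos 2 ltac:(lia)).
nra.
Qed.

Lemma omega_decomposition (i : nat) :
  (i < 3)%nat ->
  omega i = (Imom m x y (px i) t * Derive (fun s => alpha x y (nx i) s) t
             - Imom m x y (nx i) t * Derive (fun s => alpha x y (px i) s) t) / Itot m x y t
            + angmom m x y t / Itot m x y t.
Proof.
intro Hi.
rewrite !Derive_alpha by (apply nx_lt3 || apply px_lt3).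
rewrite nx_nx, px_px, px_nx, nx_px by exact Hi.
replace (angmom m x y t)
  with (Imom m x y 0 t * omega 0%nat + Imom m x y 1 t * omega 1%nat + Imom m x y 2 t * omega 2%nat).
2: { unfold omega, angvel; rewrite !Imom_eq.
     pose proof (norm2_vertex_pos 0 ltac:(lia)); pose proof (norm2_vertex_pos 1 ltac:(lia));
       pose proof (norm2_vertex_pos 2 ltac:(lia)).
     unfold angmom, cross; cbn [fst snd p dp]; field; lra. }
rewrite <- (cyclic_sum (fun l => Imom m x y l t * omega l) i Hi).
unfold Itot; rewrite <- (cyclic_sum (fun l => Imom m x y l t) i Hi).
pose proof Itot_pos as HI; unfold Itot in HI; rewrite <- (cyclic_sum (fun l => Imom m x y l t) i Hi) in HI.
field; lra.
Qed.

Lemma relative_omega_eq (l : nat) :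
  (l < 3)%nat ->
  8 * m 0%nat * m 1%nat * m 2%nat * area x y t * (omega (px l) - omega (nx l))
  = 2 * (- m l * dI l + m (nx l) * dI (nx l) + m (px l) * dI (px l))
    - Cc m x y l t * (dI (nx l) / Imom m x y (nx l) t + dI (px l) / Imom m x y (px l) t).
Proof.
intro Hl.
pose proof (dot_centered _ _ _ _ _ _ _ _ _ (centered_pos l Hl) (centered_pos l Hl)) as Hdot.
pose proof (dot_centered _ _ _ _ _ _ _ _ _ (centered_pos l Hl) (centered_vel l Hl)) as Hddot.
pose proof (cross_cyclic l Hl) as Hcross.
pose proof (norm2_vertex_pos l Hl) as Hnl.
pose proof (norm2_vertex_pos _ (nx_lt3 l)) as Hnu.
pose proof (norm2_vertex_pos _ (px_lt3 l)) as Hnv.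
pose proof (Hm_pos l Hl) as Ha.
pose proof (Hm_pos _ (nx_lt3 l)) as Hb.
pose proof (Hm_pos _ (px_lt3 l)) as Hc.
rewrite !Derive_Imom by (exact Hl || apply nx_lt3 || apply px_lt3).
replace (8 * m 0%nat * m 1%nat * m 2%nat) with (8 * (m 0%nat * m 1%nat * m 2%nat)) by ring.
rewrite <- (cyclic_prod m l Hl).
set (a := m l) in *; set (b := m (nx l)) in *; set (c := m (px l)) in *.
set (u := p (nx l)) in *; set (v := p (px l)) in *.
set (du := dp (nx l)) in *; set (dv := dp (px l)) in *.
change (omega (px l) - omega (nx l)) with (angvel v dv - angvel u du).
replace (8 * (a * b * c) * area x y t * (angvel v dv - angvel u du))
  with (4 * b * c * ((angvel v dv - angvel u du) * cross u v)) by (rewrite Hcross; ring).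
rewrite angvel_sub_cross by lra.
rewrite !dot_self, (dot_comm v u) in Hdot.
assert (Euv : dot u v = (a ^ 2 * norm2 (p l) - b ^ 2 * norm2 u - c ^ 2 * norm2 v) / (2 * b * c))
  by (rewrite Hdot; field; lra).
assert (Edu : dot u dv + dot v du
              = (a ^ 2 * dot (p l) (dp l) - b ^ 2 * dot u du - c ^ 2 * dot v dv) / (b * c))
  by (rewrite Hddot; field; lra).
rewrite Euv, Edu; unfold Cc, radrate; rewrite !Imom_eq.
fold a b c u v.
field; repeat split; lra.
Qed.

Lemma omega0_closed_form (i : nat) :
  (i < 3)%nat ->
  let j := nx i in
  let k := px i in
  (Imom m x y k t * Derive (fun s => alpha x y j s) t
   - Imom m x y j t * Derive (fun s => alpha x y k s) t) / Itot m x y t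
  = 1 / (8 * m 0%nat * m 1%nat * m 2%nat * area x y t * Itot m x y t) *
    ((Cc m x y k t * Imom m x y k t - Cc m x y j t * Imom m x y j t) * (dI i / Imom m x y i t)
     - (Cc m x y i t + 2 * m j * Imom m x y k t) * dI j
     + (Cc m x y i t + 2 * m k * Imom m x y j t) * dI k).
Proof.
intros Hi j k.
pose proof (relative_omega_eq j (nx_lt3 i)) as Hj.
pose proof (relative_omega_eq k (px_lt3 i)) as Hk.
unfold j, k in *.
rewrite !Derive_alpha by (apply nx_lt3 || apply px_lt3).
rewrite nx_nx, px_px, px_nx, nx_px in * by exact Hi.
set (D := 8 * m 0%nat * m 1%nat * m 2%nat * area x y t) in *.
assert (HD : 0 < D).
{ pose proof (Hm_pos 0 ltac:(lia)); pose proof (Hm_pos 1 ltac:(lia)); pose proof (Hm_pos 2 ltac:(lia)).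
  unfold D; apply Rmult_lt_0_compat; [repeat apply Rmult_lt_0_compat |]; lra. }
pose proof Itot_pos as HI.
transitivity ((Imom m x y (px i) t * (D * (omega i - omega (px i)))
               - Imom m x y (nx i) t * (D * (omega (nx i) - omega i))) / (D * Itot m x y t));
  [field; lra |].
rewrite Hj, Hk; unfold Cc; rewrite nx_nx, px_px, px_nx, nx_px by exact Hi.
rewrite !Imom_eq.
pose proof (Hm_pos i Hi); pose proof (Hm_pos _ (nx_lt3 i)); pose proof (Hm_pos _ (px_lt3 i)).
pose proof (norm2_vertex_pos i Hi); pose proof (norm2_vertex_pos _ (nx_lt3 i));
  pose proof (norm2_vertex_pos _ (px_lt3 i)).
field; repeat split; nra.
Qed.

End Triangle.

Theorem theoremC1
  (m : nat -> R) (x y phi : nat -> R -> R) (t : R)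
  (Hm_pos : forall i, (i < 3)%nat -> 0 < m i)
  (Hm_sum : m 0%nat + m 1%nat + m 2%nat = 1)
  (Hcom_x : forall s, m 0%nat * x 0%nat s + m 1%nat * x 1%nat s + m 2%nat * x 2%nat s = 0)
  (Hcom_y : forall s, m 0%nat * y 0%nat s + m 1%nat * y 1%nat s + m 2%nat * y 2%nat s = 0)
  (Hdx : forall i s, (i < 3)%nat -> ex_derive (x i) s)
  (Hdy : forall i s, (i < 3)%nat -> ex_derive (y i) s)
  (Hphi : forall i s, (i < 3)%nat ->
     x i s = sqrt (sqn x y i s) * cos (phi i s) /\
     y i s = sqrt (sqn x y i s) * sin (phi i s))
  (Hdphi : forall i s, (i < 3)%nat -> ex_derive (phi i) s)
  (Hnondeg : 0 < area x y t) :
  forall i, (i < 3)%nat ->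
    let I := Itot m x y t in
    let Om := angmom m x y t in
    let Ii k := Imom m x y k t in
    let dI k := Derive (fun s => Imom m x y k s) t in
    let da k := Derive (fun s => alpha x y k s) t in
    let C k := Cc m x y k t in
    let j := nx i in
    let k := px i in
    let w0 := (Ii k * da j - Ii j * da k) / I in
    Derive (phi i) t = w0 + Om / I /\
    w0 = 1 / (8 * m 0%nat * m 1%nat * m 2%nat * area x y t * I) *
         ((C k * Ii k - C j * Ii j) * (dI i / Ii i)
          - (C i + 2 * m j * Ii k) * dI j
          + (C i + 2 * m k * Ii j) * dI k).
Proof.
intros i Hi; cbv zeta.
rewrite (Derive_polar_angle (x i) (y i) (phi i) t (Hdx i t Hi) (Hdy i t Hi) (Hdphi i t Hi)
           (fun s => Hphi i s Hi)) by (apply (norm2_vertex_pos m); auto).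
split.
- apply omega_decomposition; auto.
- apply omega0_closed_form; auto.
Qed.
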